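(* For every $t \ge t_1$ and $p\ge 0$ we have $H_0^p(L^t)=H_0^p(K^t)$, but the equality $H_k^p(L^t)=H_k^p(K^t)$ does not hold in general for $1\le k \le \dim(K)-1$.
   Context: Let $X$ be a finite set and $(\mathcal{P}^{t_m})_{m\le M}$ a (not necessarily hierarchical) sequence of partitions of $X$ indexed by scales $t_1<t_2<\dots<t_M$; write $x\sim_t y$ if $x,y$ lie in the same cluster of the partition $\mathcal{P}^t$ at scale $t$ (the scale function being piecewise constant, $\mathcal{P}^t=\mathcal{P}^{t_m}$ for $t_m\le t<t_{m+1}$). The Multiscale Clustering Filtration (MCF) is $K^{t_m}=\bigcup_{l\le m}\{\Delta C : C\in\mathcal{P}^{t_l}\}$, where $\Delta C$ is the solid simplex of all non-empty subsets of $C$; its continuous-indexed version is $K^t=K^{t_m}$ for the largest $t_m\le t$, and $K:=K^{t_M}$. The Cluster Assignment Graph (CAG) is the undirected weighted graph on vertex set $X$ with adjacency matrix $A_{xy}=\min\{t\ge t_1 : x\sim_t y\}$ (with $\min\emptyset=0$, meaning $x,y$ are not linked if never in a common cluster). For $t\ge t_1$, $L^t$ is the clique complex of the thresholded CAG $G_t=(X,E_t)$ containing only the edges $\{x,y\}$ with $A_{xy}\le t$, giving the clique complex filtration $\mathcal{L}=(L^t)_{t\ge t_1}$. $H_k^p(\cdot)$ denotes the $p$-persistent $k$-th homology group (computed over $\mathbb{Z}_2$) along the respective filtration. *)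

From HB Require Import structures.
From mathcomp Require Import all_boot all_order all_algebra all_fingroup.
From mathcomp Require Import reals.
Set Implicit Arguments. Unset Strict Implicit. Unset Printing Implicit Defensive.
Import Order.TTheory GRing.Theory Num.Theory.
Local Open Scope ring_scope.

(* finite vertex set X.  A complex is a set of non-empty simplices         *)
(* (subsets of X).  Chains live in the row space 'rV['F_2]_N indexed by    *)
(* all subsets of X (N = #|{set X}|); the boundary matrix acts on the      *)
(* right (row i of bd is the boundary of simplex i).                       *)
Section Homology.
Variable X : finType.

Definition nS := #|{: {set X}}|.
Definition sx (i : 'I_nS) : {set X} := enum_val i.

Definition bd : 'M['F_2]_nS :=
  \matrix_(i, j) (((sx j \subset sx i) && ((#|sx j|.+1 == #|sx i|)%N)
                   && (sx j != set0)) : nat)%:R.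

(* projector whose row space is C_k(K): span of the k-simplices of K *)
Definition chains (K : {set {set X}}) (k : nat) : 'M['F_2]_nS :=
  diag_mx (\row_i (((sx i \in K) && ((#|sx i| == k.+1)%N)) : nat)%:R).

Definition cycles K k : 'M['F_2]_nS := (chains K k :&: kermx bd)%MS.
Definition bnds K k : 'M['F_2]_nS := (chains K k.+1 *m bd)%MS.

(* dimension over Z_2 of the persistent homology group
   H_k^{K -> K'} = Z_k(K) / (Z_k(K) \cap B_k(K'))   (for K \subset K') *)
Definition pers_betti (K K' : {set {set X}}) (k : nat) : nat :=
  (\rank (cycles K k) - \rank (cycles K k :&: bnds K' k))%N.

Definition cplx_dim (K : {set {set X}}) : nat := ((\max_(s in K) #|s|).-1)%N.

End Homology.

(* Partitions P^{t_0},...,P^{t_n} (n+1 of them, t_0 is the paper's t_1).   *)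
Section MCF.
Variables (X : finType) (R : realType) (n : nat).
Variables (P : 'I_n.+1 -> {set {set X}}) (ts : 'I_n.+1 -> R).

Definition valid_seq : Prop :=
  (forall m, partition (P m) [set: X]) /\ (forall i j : 'I_n.+1, (i < j)%N -> ts i < ts j).

Definition solid (C : {set X}) : {set {set X}} := powerset C :\ set0.

Definition mcf (t : R) : {set {set X}} :=
  \bigcup_(m | ts m <= t) \bigcup_(C in P m) solid C.

Definition same (m : 'I_n.+1) (x y : X) : bool :=
  [exists C in P m, (x \in C) && (y \in C)].
Definition linked (x y : X) : bool := [exists m, same m x y].

(* CAG adjacency: A_xy = min { t >= t_1 : x ~_t y }, with min of empty = 0 *)
Definition cag (x y : X) : R :=
  if linked x y then \big[Order.min/ts ord_max]_(m | same m x y) ts m else 0.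

(* edges of the thresholded CAG G_t (never-linked pairs are not edges) *)
Definition cag_edge (t : R) (x y : X) : bool := linked x y && (cag x y <= t).

Definition clique_cplx (t : R) : {set {set X}} :=
  [set s : {set X} | (s != set0) &&
     [forall x in s, forall y in s, (x != y) ==> cag_edge t x y]].

End MCF.

(* Vertices and edges of L^t and K^t coincide for t >= t_1: both contain every
   vertex, and {x, y} lies in either complex iff x and y share a cluster at some
   scale <= t.  Persistent H_0 only sees vertices and edges.
   For k >= 1 take X = {0, ..., k+1}, the partitions {X \ {a}, {a}} at the scales
   a = 0, ..., k+1, and finally {X}.  At t = k+1 the MCF is the boundary of the
   simplex X, a k-sphere whose fundamental cycle (the boundary of X) bounds nothing,
   while every pair x, y lies in some X \ {a}, so L^t is the full simplex on X and
   that cycle becomes a boundary. *)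

From HB Require Import structures.
From mathcomp Require Import all_boot all_order all_algebra all_fingroup.
From mathcomp Require Import reals.
Set Implicit Arguments. Unset Strict Implicit. Unset Printing Implicit Defensive.
Import Order.TTheory GRing.Theory Num.Theory.
Local Open Scope ring_scope.

Section Boundary.
Variable X : finType.
Implicit Types (K : {set {set X}}) (L M S : {set X}).

Definition facet L S := [&& L \subset S, #|L|.+1 == #|S| & L != set0].

Lemma bdE i j : bd X i j = (facet (sx j) (sx i) : nat)%:R.
Proof. by rewrite mxE -andbA. Qed.

Lemma sum_sx_card (p : pred {set X}) : (\sum_(i < nS X) p (sx i) = #|[set M | p M]|)%N.
Proof.
have -> : (\sum_(i < nS X) p (sx i) = \sum_M p M)%N.
  by rewrite /nS /sx -(big_enum_val (fun M => p M : nat)); apply: eq_bigl.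
by rewrite -sum1dep_card [RHS]big_mkcond; apply: eq_bigr => M _; case: (p M).
Qed.

Lemma intermediate_sets_imset L S : L \subset S ->
  [set M : {set X} | [&& L \subset M, M \subset S & #|M| == #|L|.+1]]
  = [set x |: L | x in S :\: L].
Proof.
move=> LS; apply/setP => M; rewrite inE; apply/and3P/imsetP => [[LM MS /eqP cM]|].
  have /cards1P[x MLx] : #|M :\: L| == 1%N by rewrite cardsDS // cM subSnn.
  have /setDP[xM xL] : x \in M :\: L by rewrite MLx set11.
  exists x; first by rewrite inE xL (subsetP MS).
  by rewrite -[LHS](setID M L) (setIidPr LM) MLx setUC.
case=> x /setDP[xS xL] ->; split; first exact: subsetUr.
  by rewrite subUset sub1set xS.
by rewrite cardsU1 xL.
Qed.

Lemma card_intermediate_sets L S : L \subset S -> #|S| = #|L|.+2 ->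
  #|[set M : {set X} | [&& L \subset M, M \subset S & #|M| == #|L|.+1]]| = 2%N.
Proof.
move=> LS cS; rewrite intermediate_sets_imset // card_in_imset; last first.
  move=> x y /setDP[_ xL] _ exy.
  have /setU1P[//|yL'] : x \in y |: L by rewrite -exy setU11.
  by rewrite yL' in xL.
by rewrite cardsDS // cS -addn2 addKn.
Qed.

Lemma card_facet_chains L S :
  #|[set M | facet M S && facet L M]|
  = (2 * [&& L != set0, L \subset S & #|S| == #|L|.+2])%N.
Proof.
have [/and3P[nL LS /eqP cS] | no_chain] := boolP [&& L != set0, L \subset S & _]; last first.
  apply/eqP; rewrite cards_eq0; apply/eqP/setP => M; rewrite !inE.
  apply: contraNF no_chain => /andP[/and3P[MS /eqP cM _] /and3P[LM /eqP cL ->]].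
  by rewrite (subset_trans LM MS) -cM -cL eqxx.
rewrite muln1 -(card_intermediate_sets LS cS); apply: eq_card => M.
rewrite !inE /facet nL cS eqSS andbT.
apply/idP/and3P => [/andP[/and3P[MS cM _] /andP[LM _]] // | [LM MS /eqP cM]].
rewrite MS LM cM eqxx /= andbT.
by apply: contraNneq nL => M0; rewrite -subset0 -M0.
Qed.

Lemma bd_mul_bd : bd X *m bd X = 0.
Proof.
apply/matrixP => i l; rewrite !mxE.
under eq_bigr => j _ do rewrite !bdE -natrM mulnb.
rewrite -natr_sum (sum_sx_card (fun M => facet M (sx i) && facet (sx l) M)).
by rewrite card_facet_chains natrM pchar_Fp_0 ?mul0r.
Qed.

Definition boundary S : 'rV['F_2]_(nS X) := row (enum_rank S) (bd X).

Lemma boundaryE S j : boundary S 0 j = (facet (sx j) S : nat)%:R.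
Proof. by rewrite mxE bdE /sx enum_rankK. Qed.

Lemma boundary_sub_kermx S : (boundary S <= kermx (bd X))%MS.
Proof. by rewrite sub_kermx -row_mul bd_mul_bd row0. Qed.

Lemma boundary_neq0 S : (1 < #|S|)%N -> boundary S != 0.
Proof.
move=> S_gt1; have /card_gt0P[x xS] : (0 < #|S|)%N by apply: ltnW.
have cSx : #|S :\ x|.+1 = #|S| by rewrite (cardsD1 x S) xS.
apply/eqP => /rowP/(_ (enum_rank (S :\ x))); rewrite boundaryE !mxE /sx enum_rankK.
by rewrite /facet subD1set cSx eqxx -card_gt0 -ltnS cSx S_gt1 => /eqP; rewrite oner_eq0.
Qed.

Lemma sub_chains K k (u : 'rV['F_2]_(nS X)) :
  (forall i, u 0 i != 0 -> (sx i \in K) && (#|sx i| == k.+1)) -> (u <= chains K k)%MS.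
Proof.
move=> supp_u; rewrite -[u](_ : u *m chains K k = u) ?submxMl //.
apply/rowP => j; rewrite /chains mul_mx_diag !mxE.
by have [->|/supp_u->] := eqVneq (u 0 j) 0; rewrite ?mul0r ?mulr1.
Qed.

Lemma eq_chains K K' k :
  (forall S, #|S| = k.+1 -> (S \in K) = (S \in K')) -> chains K k = chains K' k.
Proof.
move=> eqK; congr diag_mx; apply/rowP => i; rewrite !mxE.
by have [/eqP/eqK->|] := boolP (#|sx i| == k.+1); rewrite ?andbF ?andbT.
Qed.

Lemma chains_eq0 K k : (forall S, S \in K -> #|S| != k.+1) -> chains K k = 0.
Proof.
move=> noK; apply/matrixP => i j; rewrite !mxE.
by have [/noK/negbTE->|_] := boolP (sx i \in K); rewrite mul0rn.
Qed.

Lemma boundary_sub_chains K k S :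
  #|S| = k.+2 -> (forall F, facet F S -> F \in K) -> (boundary S <= chains K k)%MS.
Proof.
move=> cS facetsK; apply: sub_chains => j; rewrite boundaryE.
have [/[dup] /facetsK-> /and3P[_ /eqP]|] := boolP (facet _ _); last by rewrite eqxx.
by rewrite cS => /succn_inj-> _ _; rewrite eqxx.
Qed.

Lemma boundary_sub_bnds K k S : S \in K -> #|S| = k.+2 -> (boundary S <= bnds K k)%MS.
Proof.
move=> SK cS; rewrite /boundary rowE /bnds submxMr //; apply: sub_chains => j.
rewrite mxE; have [-> _|_] := eqVneq j (enum_rank S); last by rewrite andbF eqxx.
by rewrite /sx enum_rankK SK cS eqxx.
Qed.

Lemma pers_betti_bnds0 K K' k : chains K' k.+1 = 0 -> pers_betti K K' k = \rank (cycles K k).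
Proof. by move=> C0; rewrite /pers_betti /bnds C0 mul0mx capmx0 mxrank0 subn0. Qed.

Lemma pers_betti_lt_rank K K' k (u : 'rV['F_2]_(nS X)) :
  u != 0 -> (u <= cycles K k)%MS -> (u <= bnds K' k)%MS ->
  (pers_betti K K' k < \rank (cycles K k))%N.
Proof.
move=> u_neq0 uZ uB; have uZB : (u <= cycles K k :&: bnds K' k)%MS by rewrite sub_capmx uZ.
have rank_gt0 : (0 < \rank (cycles K k :&: bnds K' k))%N.
  by apply: leq_trans (mxrankS uZB); rewrite lt0n mxrank_eq0.
rewrite /pers_betti ltn_subrL rank_gt0 /=.
exact: leq_trans rank_gt0 (mxrankS (capmxSl _ _)).
Qed.

Lemma cplx_dim_ge K S : S \in K -> (#|S|.-1 <= cplx_dim K)%N.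
Proof. by move=> SK; rewrite /cplx_dim -!subn1 leq_sub2r // leq_bigmax_cond. Qed.

End Boundary.

Lemma partition_setC (T : finType) (A : {set T}) :
  A != set0 -> ~: A != set0 -> partition [set ~: A; A] [set: T].
Proof.
move=> nA nCA; rewrite -(setUCr A) setUC; apply: partitionU1 => //.
  by apply/and3P; rewrite cover1 trivIset1 inE eq_sym nCA.
by rewrite disjoints_subset setCK.
Qed.

Section MultiscaleClustering.
Variables (X : finType) (R : realType) (n : nat).
Variables (P : 'I_n.+1 -> {set {set X}}) (ts : 'I_n.+1 -> R).
Implicit Types (S : {set X}) (x y : X) (t : R).

Lemma mem_mcf t S :
  (S \in mcf P ts t) = (S != set0) && [exists m, (ts m <= t) && [exists C in P m, S \subset C]].
Proof.
apply/bigcupP/andP => [[m tm /bigcupP[C PC]]|[nS /existsP[m /andP[tm /existsP[C]]]]].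
  rewrite in_setD1 powersetE => /andP[nS SC]; split => //.
  by apply/existsP; exists m; rewrite tm; apply/existsP; exists C; rewrite PC.
case/andP => PC SC; exists m => //; apply/bigcupP; exists C => //.
by rewrite in_setD1 powersetE nS.
Qed.

Lemma set2_mem_mcf t x y :
  ([set x; y] \in mcf P ts t) = [exists m, (ts m <= t) && same P m x y].
Proof.
rewrite mem_mcf; have -> /= : [set x; y] != set0 by apply/set0Pn; exists x; exact: set21.
by apply: eq_existsb => m; congr (_ && _); apply: eq_existsb => C; rewrite subUset !sub1set.
Qed.

Lemma set1_mem_clique_cplx t x : [set x] \in clique_cplx P ts t.
Proof.
rewrite inE -card_gt0 cards1 /=.
by apply/forall_inP => x' /set1P-> ; apply/forall_inP => y /set1P->; rewrite eqxx.
Qed.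

Hypothesis P_valid : valid_seq P ts.

Lemma set1_mem_mcf t x : ts ord0 <= t -> [set x] \in mcf P ts t.
Proof.
move=> t0; case: P_valid => /(_ ord0) /and3P[/eqP coverX _ _] _.
have /bigcupP[C PC xC] : x \in cover (P ord0) by rewrite coverX inE.
rewrite mem_mcf -card_gt0 cards1 /=; apply/existsP; exists ord0; rewrite t0.
by apply/existsP; exists C; rewrite PC sub1set.
Qed.

Lemma scale_le_max m : ts m <= ts ord_max.
Proof.
case: P_valid => _ ts_mono; have [-> //|m_neq] := eqVneq m ord_max.
by apply/ltW/ts_mono; rewrite ltn_neqAle -ltnS ltn_ord andbT.
Qed.

Lemma cag_edgeP t x y : cag_edge P ts t x y = [exists m, (ts m <= t) && same P m x y].
Proof.
rewrite /cag_edge /cag; have [/existsP[m0 s0]|unlinked] /= := boolP (linked P x y); last first.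
  apply/esym/negbTE/existsPn => m; apply: contraNN unlinked => /andP[_ sm].
  by apply/existsP; exists m.
apply/idP/idP => [|/existsP[m /andP[tm sm]]]; last first.
  by apply: le_trans tm; apply: bigmin_le_cond.
apply: contraTT => /existsPn no_edge; rewrite -ltNge; apply/bigmin_gtP; split.
  by apply: lt_le_trans (scale_le_max m0); move: (no_edge m0); rewrite s0 andbT -ltNge.
by move=> m sm; move: (no_edge m); rewrite sm andbT -ltNge.
Qed.

Lemma same_sym m x y : same P m x y = same P m y x.
Proof. by apply: eq_existsb => C; rewrite [(x \in C) && _]andbC. Qed.

Lemma set2_mem_clique_cplx t x y : x != y ->
  ([set x; y] \in clique_cplx P ts t) = [exists m, (ts m <= t) && same P m x y].
Proof.
have edge_sym a b : cag_edge P ts t a b = cag_edge P ts t b a.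
  by rewrite !cag_edgeP; apply: eq_existsb => m; rewrite same_sym.
move=> nxy; rewrite inE -cag_edgeP; have -> /= : [set x; y] != set0.
  by apply/set0Pn; exists x; exact: set21.
apply/forall_inP/idP => [edges | xy_edge a /set2P[]-> ].
  by move/forall_inP/(_ y (set22 x y))/implyP/(_ nxy): (edges x (set21 x y)).
  by apply/forall_inP => b /set2P[]->; rewrite ?eqxx ?xy_edge ?implybT.
by apply/forall_inP => b /set2P[]->; rewrite ?eqxx // edge_sym xy_edge implybT.
Qed.

Lemma mem_clique_cplx_mcf_small t S : ts ord0 <= t -> (0 < #|S| <= 2)%N ->
  (S \in clique_cplx P ts t) = (S \in mcf P ts t).
Proof.
move=> t0 /andP[S_gt0]; rewrite leq_eqVlt ltnS => /orP[/cards2P[x [y [nxy ->]]] | S_le1].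
  by rewrite set2_mem_clique_cplx // set2_mem_mcf.
have /cards1P[x ->] : #|S| == 1%N by rewrite eqn_leq S_le1.
by rewrite set1_mem_clique_cplx set1_mem_mcf.
Qed.

Lemma chains_clique_cplx_mcf_small t k : ts ord0 <= t -> (k <= 1)%N ->
  chains (clique_cplx P ts t) k = chains (mcf P ts t) k.
Proof.
move=> t0 k_le1; apply: eq_chains => S cS.
by apply: mem_clique_cplx_mcf_small; rewrite // cS ltnS.
Qed.

Lemma pers_betti0_clique_cplx_mcf t t' : ts ord0 <= t -> ts ord0 <= t' ->
  pers_betti (clique_cplx P ts t) (clique_cplx P ts t') 0
  = pers_betti (mcf P ts t) (mcf P ts t') 0.
Proof. by move=> t0 t'0; rewrite /pers_betti /cycles /bnds !chains_clique_cplx_mcf_small. Qed.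

End MultiscaleClustering.

Section HollowSimplex.
Variables (R : realType) (k : nat).
Implicit Types (S : {set 'I_k.+2}) (a : 'I_k.+2).

Definition hollow_clusters (m : 'I_k.+3) : {set {set 'I_k.+2}} :=
  if unlift ord_max m is Some a then [set [set~ a]; [set a]] else [set setT].

Definition hollow_scales (m : 'I_k.+3) : R := m%:R.

Local Notation t := (k.+1%:R : R).

Lemma hollow_clusters_lift a : hollow_clusters (lift ord_max a) = [set [set~ a]; [set a]].
Proof. by rewrite /hollow_clusters liftK. Qed.

Lemma hollow_scales_lift_le a : hollow_scales (lift ord_max a) <= t.
Proof. by rewrite /hollow_scales lift_max ler_nat -ltnS. Qed.

Lemma hollow_valid : valid_seq hollow_clusters hollow_scales.
Proof.
split => [m|i j]; last by rewrite /hollow_scales ltr_nat.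
rewrite /hollow_clusters; case: unliftP => [a _|_].
  by apply: partition_setC; rewrite -card_gt0 ?cardsC1 ?cards1 ?card_ord.
by apply/and3P; rewrite cover1 trivIset1 inE eq_sym -card_gt0 cardsT card_ord eqxx.
Qed.

Lemma mem_hollow_mcf S :
  (S \in mcf hollow_clusters hollow_scales t) = (S != set0) && (S != setT).
Proof.
rewrite mem_mcf; congr (_ && _).
apply/existsP/idP => [[m /andP[tm /existsP[C /andP[PC SC]]]] | nT].
  move: PC tm; rewrite /hollow_clusters; case: unliftP => [a _|-> _]; last first.
    by rewrite /hollow_scales ler_nat ltnn.
  move=> /set2P CE _; apply: contraTneq (subset_leq_card SC) => ->.
  by rewrite -ltnNge cardsT card_ord; case: CE => ->; rewrite ?cardsC1 ?cards1 ?card_ord.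
have /subsetPn[a _ aS] : ~~ (setT \subset S) by rewrite subTset.
exists (lift ord_max a); rewrite hollow_scales_lift_le hollow_clusters_lift.
by apply/existsP; exists [set~ a]; rewrite set21 subsetC sub1set inE.
Qed.

Lemma mem_hollow_clique_cplx S : (1 <= k)%N ->
  (S \in clique_cplx hollow_clusters hollow_scales t) = (S != set0).
Proof.
move=> k_gt0; rewrite inE; apply/andb_idr => _.
apply/forall_inP => x _; apply/forall_inP => y _; apply/implyP => nxy.
rewrite cag_edgeP; last exact: hollow_valid.
have /set0Pn[a] : ~: [set x; y] != set0.
  apply: contraTneq k_gt0 => C0; have := cardsC [set x; y].
  by rewrite C0 cards0 cards2 nxy card_ord addn0 => -[<-].
rewrite !inE negb_or => /andP[ax ay].
apply/existsP; exists (lift ord_max a); rewrite hollow_scales_lift_le /=.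
apply/existsP; exists [set~ a]; rewrite hollow_clusters_lift set21 !inE.
by rewrite eq_sym ax eq_sym ay.
Qed.

Lemma setT_mem_hollow_mcf :
  setT \in mcf hollow_clusters hollow_scales (hollow_scales ord_max).
Proof.
rewrite mem_mcf -card_gt0 cardsT card_ord /=; apply/existsP; exists ord_max.
by rewrite lexx; apply/existsP; exists setT; rewrite /hollow_clusters unlift_none set11 subxx.
Qed.

Lemma hollow_pers_betti_lt : (1 <= k)%N ->
  (pers_betti (clique_cplx hollow_clusters hollow_scales t)
              (clique_cplx hollow_clusters hollow_scales t) k
   < pers_betti (mcf hollow_clusters hollow_scales t) (mcf hollow_clusters hollow_scales t) k)%N.
Proof.
move=> k_gt0; set L := clique_cplx _ _ t; set K := mcf _ _ t.
have cardT : #|[set: 'I_k.+2]| = k.+2 by rewrite cardsT card_ord.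
have LK : chains L k = chains K k.
  apply: eq_chains => S cS; rewrite mem_hollow_clique_cplx // mem_hollow_mcf.
  rewrite -card_gt0 cS /=; apply/esym/negP => /eqP ST.
  by move: cS; rewrite ST cardT => /succn_inj/esym/n_Sn.
have K0 : chains K k.+1 = 0.
  apply: chains_eq0 => S; rewrite mem_hollow_mcf -properT => /andP[_ /proper_card].
  by rewrite cardT => /ltn_eqF->.
rewrite [pers_betti K K k]pers_betti_bnds0 // /cycles -LK.
apply: (pers_betti_lt_rank (u := boundary setT)).
- by apply: boundary_neq0; rewrite cardT.
- rewrite sub_capmx boundary_sub_kermx andbT; apply: (boundary_sub_chains cardT).
  by move=> F /and3P[_ _ nF]; rewrite mem_hollow_clique_cplx.
- by apply: (boundary_sub_bnds _ cardT); rewrite mem_hollow_clique_cplx // -card_gt0 cardT.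
Qed.

End HollowSimplex.

Theorem proposition6 (R : realType) :
  (forall (X : finType) (n : nat) (P : 'I_n.+1 -> {set {set X}})
          (ts : 'I_n.+1 -> R),
     valid_seq P ts ->
     forall t p : R, ts ord0 <= t -> 0 <= p ->
       pers_betti (clique_cplx P ts t) (clique_cplx P ts (t + p)) 0
       = pers_betti (mcf P ts t) (mcf P ts (t + p)) 0)
  /\
  (forall k : nat, (1 <= k)%N ->
     exists (X : finType) (n : nat) (P : 'I_n.+1 -> {set {set X}})
            (ts : 'I_n.+1 -> R),
       [/\ valid_seq P ts,
           (k <= cplx_dim (mcf P ts (ts ord_max)) - 1)%N &
           exists t p : R, [/\ ts ord0 <= t, 0 <= p &
             pers_betti (clique_cplx P ts t) (clique_cplx P ts (t + p)) k
             <> pers_betti (mcf P ts t) (mcf P ts (t + p)) k]]).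
Proof.
split=> [X n P ts P_valid t p t0 p_ge0 | k k_gt0].
  by apply: pers_betti0_clique_cplx_mcf => //; apply: le_trans t0 _; rewrite lerDl.
exists ('I_k.+2 : finType), k.+2, (@hollow_clusters k), (@hollow_scales R k); split.
- exact: hollow_valid.
- have := cplx_dim_ge (setT_mem_hollow_mcf R k).
  by rewrite cardsT card_ord => /(leq_sub2r 1); rewrite subn1.
- exists k.+1%:R, 0; split => //.
  by rewrite addr0; apply/eqP; rewrite ltn_eqF // hollow_pers_betti_lt.
Qed.
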